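(* Let $E$ be the elliptic curve $Y^2+11Y=X^3+11X^2+33X$ over $\mathbb{Q}$ and $t=Y-\frac{11}{X}$. For every point $P=(x,y)\in E(\mathbb{Q})$ with $x\neq 0$, we have $H_X(P)\le 7\,H_t(P)^{2/3}$, i.e. $h_X(P)\le \tfrac23 h_t(P)+\log 7$. More precisely, for every finite prime $p$, $\max(1,|x|_p)\le \max(1,|y-\tfrac{11}{x}|_p)^{2/3}$, and at the archimedean place $\max(1,|x|)\le 7\max(1,|y-\tfrac{11}{x}|)^{2/3}$.
   Context: For a non-constant function $f$ on $E$ and $P\in E(\mathbb{Q})$ with $f(P)$ finite, $H_f(P)=\prod_{p\le\infty}\max(1,|f(P)|_p)$ and $h_f(P)=\log H_f(P)$. *)

From HB Require Import structures.
From mathcomp Require Import all_boot all_order all_algebra.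
Set Implicit Arguments. Unset Strict Implicit. Unset Printing Implicit Defensive.
Import Order.TTheory GRing.Theory Num.Theory.
Local Open Scope ring_scope.

(* |r|_p for a prime p: p^(-v_p(r)), with |0|_p = 0.  Here
   r = numq r / denq r in lowest terms, so v_p(r) = v_p(num) - v_p(den). *)
Definition padic_abs (p : nat) (r : rat) : rat :=
  if r == 0 then 0
  else ((p ^ logn p `|denq r|)%N)%:R / ((p ^ logn p `|numq r|)%N)%:R.

Definition loc_fin (p : nat) (r : rat) : rat := Num.max 1 (padic_abs p r).
Definition loc_inf (r : rat) : rat := Num.max 1 `|r|.

(* H(r) = prod_{p <= oo} max(1,|r|_p).  All primes not dividing
   numq r * denq r have |r|_p = 1, so the product over all places equals the
   (finite) product over the archimedean place and the primes dividing
   numq r * denq r. *)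
Definition height (r : rat) : rat :=
  loc_inf r * \prod_(p <- primes (`|numq r| * `|denq r|)%N) loc_fin p r.

Definition onE (x y : rat) : Prop :=
  y ^+ 2 + 11 * y = x ^+ 3 + 11 * x ^+ 2 + 33 * x.

Definition tfun (x y : rat) : rat := y - 11 / x.

From HB Require Import structures.
From mathcomp Require Import all_boot all_order all_algebra.
From mathcomp Require Import ring lra zify.
Import Order.TTheory GRing.Theory Num.Theory.
Local Open Scope ring_scope.

(* For a prime p, max(1,|r|_p) = p^(v_p(den r)), so
   the local inequalities at finite places all follow from the single
   divisibility den(x)^3 | den(t)^2.  That divisibility comes from two
   facts: on an integral Weierstrass curve Y^2 + a3 Y = X^3 + a2 X^2 + a4 X + a6
   the denominators of a rational point satisfy den(y)^2 = den(x)^3, and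
   den(y) divides den(y - 11/x) because den(y) is coprime to num(x).  A point with x <= -7 cannot lie on E, and for x > 7 the
   curve equation gives x^3 <= (|t| + 99/14)^2 <= 343 max(1,|t|)^2, while for
   |x| <= 7 the bound is trivial.  Since H(r) = max(1,|r|) * den(r), the height inequality is
   the product of the archimedean inequality and den(x)^3 <= den(t)^2. *)

Lemma loc_finE (p : nat) (r : rat) :
  loc_fin p r = ((p ^ logn p `|denq r|)%N)%:R.
Proof.
rewrite /loc_fin /padic_abs.
have [->|r0] := eqVneq r 0; first by rewrite (_ : denq 0 = 1) // logn1 expn0 max_l.
case Hd: (logn p `|denq r|) => [|e].
  by rewrite expn0 max_l // ler_pdivrMr ?mul1r ?ler1n ?ltr0n ?pfactor_gt0.
have : (0 < logn p `|denq r|)%N by rewrite Hd.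
rewrite logn_gt0 mem_primes => /and3P [pp _ p_den].
have p_num : coprime p `|numq r|.
  by rewrite coprime_sym; apply: coprime_dvdr p_den (coprime_num_den r).
by rewrite (logn_coprime p_num) expn0 divr1 max_r // ler1n expn_gt0 prime_gt0.
Qed.

Lemma prod_primes_logn (m n : nat) : (0 < m)%N -> (n %| m)%N ->
  (\prod_(p <- primes m) p ^ logn p n)%N = n.
Proof.
move=> m0 nm; have n0 : (0 < n)%N := dvdn_gt0 m0 nm.
rewrite (bigID (fun p => p \in primes n)) /=.
rewrite [X in (_ * X)%N]big1 ?muln1; last first.
  by move=> p; rewrite -logn_gt0 lt0n negbK => /eqP ->.
rewrite -big_filter (perm_big (primes n)).
  by rewrite {3}(prod_prime_decomp n0) prime_decompE big_map.
apply: uniq_perm; [exact: filter_uniq (primes_uniq _) | exact: primes_uniq |].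
move=> p; rewrite mem_filter andb_idr // !mem_primes => /and3P [-> _ pn].
by rewrite m0 (dvdn_trans pn nm).
Qed.

Lemma heightE (r : rat) : height r = loc_inf r * (`|denq r|%N)%:R.
Proof.
rewrite /height; congr (_ * _).
have [->|r0] := eqVneq r 0; first by rewrite (_ : denq 0 = 1) // big_nil.
under eq_bigr do rewrite loc_finE.
rewrite -natr_prod prod_primes_logn ?dvdn_mull //.
by rewrite muln_gt0 !absz_gt0 numq_eq0 r0 gt_eqF ?denq_gt0.
Qed.

Lemma loc_fin_le_of_dvd (m n p : nat) (r s : rat) : prime p ->
  (`|denq r| ^ m %| `|denq s| ^ n)%N -> loc_fin p r ^+ m <= loc_fin p s ^+ n.
Proof.
move=> pp rs; rewrite !loc_finE -!natrX ler_nat -!expnM.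
apply: leq_pexp2l; first exact: prime_gt0.
have s0 : (0 < `|denq s| ^ n)%N by rewrite expn_gt0 absz_gt0 gt_eqF ?denq_gt0.
have := dvdn_leq_log p s0 rs; rewrite !lognX; lia.
Qed.

Lemma coprimez_MDl (q m n : int) : coprimez m (q * m + n) = coprimez m n.
Proof. by rewrite /coprimez gcdzMDl. Qed.

Lemma weierstrass_den_dvd (a2 a3 a4 a6 a b c d : int) :
  coprimez a b -> coprimez c d ->
  b ^+ 3 * (c * (c + a3 * d)) =
    d ^+ 2 * (a ^+ 3 + a2 * a ^+ 2 * b + a4 * a * b ^+ 2 + a6 * b ^+ 3) ->
  (d ^+ 2 %| b ^+ 3)%Z /\ (b ^+ 3 %| d ^+ 2)%Z.
Proof.
move=> cab ccd E; split.
- have : (d ^+ 2 %| b ^+ 3 * (c * (c + a3 * d)))%Z by rewrite E dvdz_mulr.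
  rewrite Gauss_dvdzl // coprimez_pexpl // coprimezMr coprimez_sym ccd /=.
  by rewrite addrC coprimez_MDl coprimez_sym.
- have : (b ^+ 3 %| d ^+ 2 * (a ^+ 3 + a2 * a ^+ 2 * b + a4 * a * b ^+ 2 +
                                a6 * b ^+ 3))%Z by rewrite -E dvdz_mulr.
  rewrite Gauss_dvdzl // coprimez_pexpl //.
  have -> : a ^+ 3 + a2 * a ^+ 2 * b + a4 * a * b ^+ 2 + a6 * b ^+ 3 =
            (a2 * a ^+ 2 + a4 * a * b + a6 * b ^+ 2) * b + a ^+ 3 by ring.
  by rewrite coprimez_MDl coprimezXr // coprimez_sym.
Qed.

Lemma weierstrass_denq (a2 a3 a4 a6 : int) (x y : rat) :
  y ^+ 2 + a3%:~R * y = x ^+ 3 + a2%:~R * x ^+ 2 + a4%:~R * x + a6%:~R ->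
  (`|denq y| ^ 2 = `|denq x| ^ 3)%N.
Proof.
move=> hE.
have cx : coprimez (numq x) (denq x) by rewrite coprimezE coprime_num_den.
have cy : coprimez (numq y) (denq y) by rewrite coprimezE coprime_num_den.
have cleared : denq x ^+ 3 * (numq y * (numq y + a3 * denq y)) =
    denq y ^+ 2 * (numq x ^+ 3 + a2 * numq x ^+ 2 * denq x +
                   a4 * numq x * denq x ^+ 2 + a6 * denq x ^+ 3).
  apply: (@intr_inj rat); rewrite !(rmorphM, rmorphD, rmorphXn) /=.
  rewrite !numqE.
  transitivity ((denq x)%:~R ^+ 3 * (denq y)%:~R ^+ 2 *
                (y ^+ 2 + a3%:~R * y) : rat); first by ring.
  by rewrite hE; ring.
have [dy_dx dx_dy] := weierstrass_den_dvd a2 a3 a4 a6 _ _ _ _ cx cy cleared.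
by apply/eqP; rewrite eqn_dvd -!abszX -!dvdzE dy_dx dx_dy.
Qed.

Lemma denq_dvd_sub_div (k : int) (x y : rat) : x != 0 ->
  coprimez (denq y) (numq x) -> (denq y %| denq (y - k%:~R / x))%Z.
Proof.
move=> x0 cyx; set t := y - k%:~R / x.
have cleared : numq t * (numq x * denq y) =
    (numq y * numq x - k * denq x * denq y) * denq t.
  apply: (@intr_inj rat); rewrite !(rmorphM, rmorphB) /= !numqE /t.
  by field.
have cyc : coprimez (denq y) (numq y * numq x - k * denq x * denq y).
  have -> : numq y * numq x - k * denq x * denq y =
            (- (k * denq x)) * denq y + numq y * numq x by ring.
  rewrite coprimez_MDl coprimezMr cyx andbT coprimez_sym.
  by rewrite coprimezE coprime_num_den.
by rewrite -(Gauss_dvdzr _ cyc) -cleared !dvdz_mull.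
Qed.

Lemma denq_x_dvd_denq_t (x y : rat) : onE x y -> x != 0 ->
  (`|denq x| ^ 3 %| `|denq (tfun x y)| ^ 2)%N.
Proof.
move=> hE x0.
have den_eq : (`|denq y| ^ 2 = `|denq x| ^ 3)%N.
  by apply: (weierstrass_denq 11 11 33 0); rewrite hE; ring.
have cyx : coprimez (denq y) (numq x).
  rewrite coprimez_sym coprimezE -(@coprime_pexpr 2) // den_eq.
  exact/coprimeXr/coprime_num_den.
rewrite -den_eq dvdn_exp2r //.
by move: (denq_dvd_sub_div 11 _ _ x0 cyx); rewrite dvdzE.
Qed.

(* No rational point of E has x <= -7: there the right-hand side
   x^3 + 11x^2 + 33x = (x + 7)(x^2 + 4x + 5) - 35 is at most -35, while the
   left-hand side y^2 + 11y = (y + 11/2)^2 - 121/4 is at least -121/4. *)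
Lemma onE_x_gt (x y : rat) : onE x y -> -7 < x.
Proof.
rewrite /onE => hE; rewrite real_ltNge ?num_real //; apply/negP => x_le.
have lhs_ge : - (121 / 4) <= y ^+ 2 + 11 * y.
  have -> : y ^+ 2 + 11 * y = (y + 11 / 2) ^+ 2 - 121 / 4 by field.
  by rewrite lerBrDr addrC subrr sqr_ge0.
have quad_pos : 0 < x ^+ 2 + 4 * x + 5.
  have sq_ge0 : 0 <= (x + 2) ^+ 2 := sqr_ge0 _.
  have : (x + 2) ^+ 2 = x ^+ 2 + 4 * x + 4 by ring.
  lra.
have prod_le : (x + 7) * (x ^+ 2 + 4 * x + 5) <= 0 by apply: mulr_le0_ge0; lra.
have : x ^+ 3 + 11 * x ^+ 2 + 33 * x = (x + 7) * (x ^+ 2 + 4 * x + 5) - 35 by ring.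
lra.
Qed.

Lemma onE_cube_le (x y : rat) : onE x y -> 0 < x -> x ^+ 3 <= (`|y| + 11 / 2) ^+ 2.
Proof.
rewrite /onE => hE x0.
have rhs_ge : x ^+ 3 <= y ^+ 2 + 11 * y.
  have x2_ge0 : 0 <= x ^+ 2 := sqr_ge0 x.
  rewrite hE; lra.
have y_le : y <= `|y| := ler_norm y.
have -> : (`|y| + 11 / 2) ^+ 2 = `|y| ^+ 2 + 11 * `|y| + 121 / 4 by field.
rewrite real_normK ?num_real //; lra.
Qed.

Lemma loc_inf_le (x y : rat) : onE x y ->
  loc_inf x ^+ 3 <= 7 ^+ 3 * loc_inf (tfun x y) ^+ 2.
Proof.
rewrite /loc_inf /tfun => hE; move def_t: (y - 11 / x) => t.
have m_ge1 : 1 <= Num.max 1 `|t| by rewrite le_max lexx.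
have m_ge0 : 0 <= Num.max 1 `|t| := le_trans ler01 m_ge1.
have t_le : `|t| <= Num.max 1 `|t| by rewrite le_max lexx orbT.
have [x_small|x_large] := lerP `|x| 7.
  have h : Num.max 1 `|x| ^+ 3 <= 7 ^+ 3.
    by apply: lerXn2r; rewrite ?nnegrE ?ge_max ?x_small ?le_max ?ler01.
  by apply: (le_trans h); rewrite ler_peMr ?exprn_ge0 ?expr_ge1.
have x_gt7 : 7 < x.
  by move: x_large; rewrite ltr_normr => /orP [//|]; have := onE_x_gt _ _ hE; lra.
have x0 : 0 < x by lra.
have -> : Num.max 1 `|x| = x by rewrite gtr0_norm // max_r //; lra.
have inv_ge0 : 0 <= 11 / x by rewrite divr_ge0 //; lra.
have inv_le : 11 / x <= 11 / 7 by rewrite ler_wpM2l // lef_pV2 ?posrE //; lra.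
have y_le : `|y| <= `|t| + 11 / 7.
  have -> : y = t + 11 / x by rewrite -def_t; ring.
  by apply: (le_trans (ler_normD _ _)); rewrite (ger0_norm inv_ge0) lerD2l.
have base_le : `|y| + 11 / 2 <= 113 / 14 * Num.max 1 `|t| by lra.
apply: (le_trans (onE_cube_le _ _ hE x0)).
apply: (le_trans (_ : _ <= (113 / 14 * Num.max 1 `|t|) ^+ 2)).
  by apply: lerXn2r; rewrite ?nnegrE; have := normr_ge0 y; lra.
by rewrite exprMn; have := exprn_ge0 2 m_ge0; lra.
Qed.

Theorem mainTheorem5 (x y : rat) :
  onE x y -> x != 0 ->
  [/\ height x ^+ 3 <= 7 ^+ 3 * height (tfun x y) ^+ 2,
      (forall p : nat, prime p ->
         loc_fin p x ^+ 3 <= loc_fin p (tfun x y) ^+ 2)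
    & loc_inf x ^+ 3 <= 7 ^+ 3 * loc_inf (tfun x y) ^+ 2].
Proof.
move=> hE x0.
have den_dvd := denq_x_dvd_denq_t _ _ hE x0.
have arch := loc_inf_le _ _ hE.
split=> [|p pp|//]; last exact: loc_fin_le_of_dvd.
have den_le : ((`|denq x|%N)%:R : rat) ^+ 3 <= (`|denq (tfun x y)|%N)%:R ^+ 2.
  by rewrite -!natrX ler_nat dvdn_leq // expn_gt0 absz_gt0 gt_eqF ?denq_gt0.
have loc_ge0 : 0 <= loc_inf x ^+ 3 by rewrite exprn_ge0 // le_max ler01.
rewrite !heightE !exprMn [X in _ <= X]mulrA.
exact: ler_pM loc_ge0 (exprn_ge0 _ (ler0n _ _)) arch den_le.
Qed.
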